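(* Let $R$ be a commutative ring. The pair $({}^{\perp}\mathrm{Rel}_R(\varkappa),\mathrm{Rel}_R(\varkappa))$ is a torsion pair in $\mathrm{Rep}_R(\varkappa)$, and it is split if and only if $R$ is a finite product of fields.
   Context: $\mathrm{Rep}_R(\varkappa)$ is the (abelian) category of representations of the Kronecker quiver: objects $(M_t,M_h;\mu_a,\mu_b)$ with $M_t,M_h$ $R$-modules and $\mu_a,\mu_b\in\mathrm{Hom}_R(M_t,M_h)$; morphisms pairs $(f_t,f_h)$ of $R$-linear maps with $f_h\mu_c=\mu'_cf_t$ for $c=a,b$. $\mathrm{Rel}_R(\varkappa)$ is the full subcategory of objects with $\ker(\mu_a)\cap\ker(\mu_b)=0$, and ${}^{\perp}\mathrm{Rel}_R(\varkappa)$ is the full subcategory of objects $T$ with $\mathrm{Hom}(T,F)=0$ for all $F\in\mathrm{Rel}_R(\varkappa)$. A torsion pair $(\mathcal{T},\mathcal{F})$: $\mathrm{Hom}(\mathcal{T},\mathcal{F})=0$ and every object $M$ has a short exact sequence $0\to T_M\to M\to F_M\to0$ with $T_M\in\mathcal{T}$, $F_M\in\mathcal{F}$; it is split if this sequence splits for every $M$. *)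

From HB Require Import structures.
From mathcomp Require Import all_boot all_algebra.
Set Implicit Arguments. Unset Strict Implicit. Unset Printing Implicit Defensive.
Import GRing.Theory.
Local Open Scope ring_scope.

(* Representations of the Kronecker quiver over a ring R:
   (M_t, M_h; mu_a, mu_b) with R-linear mu_a, mu_b : M_t -> M_h. *)
Record krep (R : pzRingType) := KRep {
  Mt : lmodType R;
  Mh : lmodType R;
  mua : {linear Mt -> Mh};
  mub : {linear Mt -> Mh} }.

Record khom (R : pzRingType) (M N : krep R) := KHom {
  ft : {linear Mt M -> Mt N};
  fh : {linear Mh M -> Mh N};
  comm_a : forall x, fh (mua M x) = mua N (ft x);
  comm_b : forall x, fh (mub M x) = mub N (ft x) }.

Definition zero_hom (R : pzRingType) (M N : krep R) (f : khom M N) : Prop :=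
  (forall x, ft f x = 0) /\ (forall y, fh f y = 0).

Definition isRel (R : pzRingType) (F : krep R) : Prop :=
  forall x : Mt F, mua F x = 0 -> mub F x = 0 -> x = 0.

Definition isPerpRel (R : pzRingType) (T : krep R) : Prop :=
  forall F : krep R, isRel F -> forall f : khom T F, zero_hom f.

Definition short_exact (R : pzRingType) (T M F : krep R)
    (f : khom T M) (g : khom M F) : Prop :=
  [/\ injective (ft f) /\ injective (fh f),
      (forall y, exists x, ft g x = y) /\ (forall y, exists x, fh g x = y) &
      (forall x, ft g x = 0 <-> exists z, ft f z = x) /\
      (forall x, fh g x = 0 <-> exists z, fh f z = x)].

Definition ses_splits (R : pzRingType) (M F : krep R) (g : khom M F) : Prop :=
  exists s : khom F M, (forall y, ft g (ft s y) = y) /\ (forall y, fh g (fh s y) = y).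

Definition torsion_pair (R : pzRingType) (Tc Fc : krep R -> Prop) : Prop :=
  (forall (T F : krep R), Tc T -> Fc F -> forall f : khom T F, zero_hom f) /\
  (forall M : krep R, exists (T F : krep R) (f : khom T M) (g : khom M F),
      [/\ Tc T, Fc F & short_exact f g]).

Definition split_torsion_pair (R : pzRingType) (Tc Fc : krep R -> Prop) : Prop :=
  torsion_pair Tc Fc /\
  (forall (T M F : krep R) (f : khom T M) (g : khom M F),
      Tc T -> Fc F -> short_exact f g -> ses_splits g).

(* R is isomorphic (as a ring) to a finite product of fields F_0 x ... x F_{n-1};
   n = 0 gives the zero ring. *)
Definition finite_product_of_fields (R : comPzRingType) : Prop :=
  exists (n : nat) (K : 'I_n -> fieldType) (phi : R -> forall i, K i),
    [/\ bijective phi,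
        (forall i, phi 1 i = 1),
        (forall x y i, phi (x + y) i = phi x i + phi y i) &
        (forall x y i, phi (x * y) i = phi x i * phi y i)].

(* The torsion part of a representation M is (ker mua ∩ ker mub, 0), and the
   torsion-free quotient is the image of x |-> (mua x, mub x) in Mh x Mh, with
   head Mh; the left class consists exactly of the representations with zero
   head.  In a sequence 0 -> T -> M -> F -> 0 of this kind the head map of
   M -> F is bijective, so the sequence splits as soon as the tail map does;
   hence all of them split when every surjection of R-modules splits.
   Conversely, for an ideal I the torsion part of (R, R/I; R -> R/I, 0) is
   (I, 0), so a splitting makes I a direct summand of R, i.e. I = Re with e
   idempotent.  Rings all of whose ideals are generated by idempotents are the
   finite products of fields: they admit no strictly decreasing infinite chain
   of idempotents, so 1 is a finite orthogonal sum of idempotents e for which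
   eR is a field; conversely, in such rings a Zorn argument gives every
   submodule a complement, so every surjection splits. *)

From HB Require Import structures.
From mathcomp Require Import all_boot all_algebra.
From mathcomp Require Import boolp classical_sets.
Set Implicit Arguments. Unset Strict Implicit. Unset Printing Implicit Defensive.
Import GRing.Theory.
Local Open Scope ring_scope.

Definition mk_linear (R : pzRingType) (U V : lmodType R) (f : U -> V)
  (f_lin : linear f) : {linear U -> V} :=
  HB.pack f (GRing.isLinear.Build _ _ _ _ f f_lin).

Section KernelImage.
Variables (R : pzRingType) (U W : lmodType R) (f : {linear U -> W}).

Definition lker_pred : {pred U} := fun x => f x == 0.

Lemma lker_pred_closed : subsemimod_closed lker_pred.
Proof.
split; [split|] => [|x y|a x]; rewrite !unfold_in ?linear0 //.
  by move=> /eqP fx /eqP fy; rewrite linearD fx fy addr0.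
by move=> /eqP fx; rewrite linearZZ fx scaler0.
Qed.
HB.instance Definition _ := GRing.isSubmodClosed.Build R U lker_pred lker_pred_closed.

Record lker_type := LkerElt { lker_val : U; lker_valP : lker_val \in lker_pred }.
HB.instance Definition _ := [isSub for lker_val].
HB.instance Definition _ := [Choice of lker_type by <:].
HB.instance Definition _ := [SubChoice_isSubLmodule of lker_type by <:].

Lemma lker_valK (x : lker_type) : f (val x) = 0.
Proof. exact/eqP/lker_valP. Qed.

Definition limg_pred : {pred W} := fun y => `[< exists x, f x = y >].

Lemma limg_pred_closed : subsemimod_closed limg_pred.
Proof.
split; [split|] => [|y z|a y]; rewrite !unfold_in.
- by apply/asboolP; exists 0; rewrite linear0.
- by move=> /asboolP[x <-] /asboolP[x' <-]; apply/asboolP; exists (x + x'); rewrite linearD.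
- by move=> /asboolP[x <-]; apply/asboolP; exists (a *: x); rewrite linearZZ.
Qed.
HB.instance Definition _ := GRing.isSubmodClosed.Build R W limg_pred limg_pred_closed.

Record limg_type := LimgElt { limg_val : W; limg_valP : limg_val \in limg_pred }.
HB.instance Definition _ := [isSub for limg_val].
HB.instance Definition _ := [Choice of limg_type by <:].
HB.instance Definition _ := [SubChoice_isSubLmodule of limg_type by <:].

Lemma limg_mem x : f x \in limg_pred.
Proof. by apply/asboolP; exists x. Qed.

Definition limg_proj_fun (x : U) : limg_type := LimgElt (limg_mem x).

Lemma limg_proj_linear : linear limg_proj_fun.
Proof. by move=> a x y; apply: val_inj; rewrite /= linearP. Qed.
Definition limg_proj := mk_linear limg_proj_linear.

Lemma limg_proj_surj (y : limg_type) : exists x, limg_proj x = y.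
Proof.
case: y => y /[dup] /asboolP[x fx] yP.
by exists x; apply: val_inj; rewrite /= fx.
Qed.

End KernelImage.

Section TorsionPart.
Variables (R : pzRingType) (M : krep R).

Lemma mu_pair_linear : linear (fun x : Mt M => (mua M x, mub M x)).
Proof. by move=> a x y; rewrite !linearP. Qed.
Definition mu_pair := mk_linear mu_pair_linear.

(* ['rV_0] serves as the zero module. *)
Definition torsion_part : krep R :=
  KRep (\0 : {linear lker_type mu_pair -> 'rV[R]_0}) \0.

Definition torsionfree_part : krep R :=
  KRep (fst \o val : {linear limg_type mu_pair -> Mh M}) (snd \o val).

Lemma mu_pair_torsion (x : lker_type mu_pair) :
  mua M (val x) = 0 /\ mub M (val x) = 0.
Proof. by have [] := lker_valK x. Qed.

Definition torsion_incl : khom torsion_part M :=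
  @KHom _ torsion_part M val \0
    (fun x => esym (mu_pair_torsion x).1) (fun x => esym (mu_pair_torsion x).2).

Definition torsionfree_proj : khom M torsionfree_part :=
  @KHom _ M torsionfree_part (limg_proj mu_pair) idfun (fun=> erefl) (fun=> erefl).

End TorsionPart.

Lemma torsionfree_part_rel (R : pzRingType) (M : krep R) : isRel (torsionfree_part M).
Proof.
move=> x /= ax bx; apply: val_inj.
by rewrite [LHS]surjective_pairing ax bx.
Qed.

Lemma perpRelP (R : pzRingType) (T : krep R) :
  isPerpRel T <-> forall y : Mh T, y = 0.
Proof.
split=> [Tperp y | T0 F Frel f].
  by have [_] := Tperp _ (@torsionfree_part_rel _ T) (torsionfree_proj T); apply.
have fh0 y : fh f y = 0 by rewrite (T0 y) linear0.
split=> // x; apply: Frel; by rewrite -?comm_a -?comm_b fh0.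
Qed.

Lemma torsion_short_exact (R : pzRingType) (M : krep R) :
  short_exact (torsion_incl M) (torsionfree_proj M).
Proof.
split.
- split=> [x y /val_inj //|x y _]; by rewrite (thinmx0 x) (thinmx0 y).
- by split=> y; [exact: limg_proj_surj | exists y].
split=> [x | y]; last by split=> [/= ->|[z <-]]; [exists 0 | ].
split=> [/(congr1 val) /= mux0 | [z <-]].
  have xP : x \in lker_pred (mu_pair M) by apply/eqP.
  by exists (LkerElt xP).
by apply: val_inj; exact: lker_valK.
Qed.

Lemma torsion_pair_perpRel_Rel (R : pzRingType) : torsion_pair (@isPerpRel R) (@isRel R).
Proof.
split=> [T F Tperp Frel f | M]; first exact: Tperp.
exists (torsion_part M), (torsionfree_part M), (torsion_incl M), (torsionfree_proj M).
split; [exact/perpRelP/thinmx0 | exact: torsionfree_part_rel | exact: torsion_short_exact].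
Qed.

Definition surjections_split (R : pzRingType) : Prop :=
  forall (U V : lmodType R) (g : {linear U -> V}), (forall y, exists x, g x = y) ->
  exists s : {linear V -> U}, forall y, g (s y) = y.

Section SplitSequence.
Variables (R : pzRingType) (T M F : krep R) (f : khom T M) (g : khom M F).
Hypotheses (Tperp : isPerpRel T) (Frel : isRel F) (fg_exact : short_exact f g).

Lemma ses_tail_ker x : ft g x = 0 <-> mua M x = 0 /\ mub M x = 0.
Proof.
have T0 := proj1 (perpRelP T) Tperp; case: fg_exact => _ _ [ker_t _].
split=> [/ker_t [z <-] | [ax bx]].
  by rewrite -!(comm_a, comm_b) !(T0 (mua T z), T0 (mub T z)) !linear0.
by apply: Frel; rewrite -?comm_a -?comm_b ?ax ?bx linear0.
Qed.

Lemma ses_head_injective : injective (fh g).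
Proof.
have T0 := proj1 (perpRelP T) Tperp; case: fg_exact => _ _ [_ ker_h].
move=> y y' eq_g; apply/eqP; rewrite -subr_eq0; apply/eqP.
have /ker_h [z <-] : fh g (y - y') = 0 by rewrite linearB eq_g subrr.
by rewrite (T0 z) linear0.
Qed.

Lemma ses_splits_of_surjections_split : surjections_split R -> ses_splits g.
Proof.
case: fg_exact => _ [surj_t surj_h] _ split_surj.
have [st gstK] := split_surj _ _ (ft g) surj_t.
have [sh gshK] := split_surj _ _ (fh g) surj_h.
have shK y : sh (fh g y) = y by apply: ses_head_injective; rewrite gshK.
have comm_sa y : sh (mua F y) = mua M (st y) by rewrite -[in LHS](gstK y) -comm_a shK.
have comm_sb y : sh (mub F y) = mub M (st y) by rewrite -[in LHS](gstK y) -comm_b shK.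
by exists (KHom comm_sa comm_sb).
Qed.

End SplitSequence.

Definition submodule (R : pzRingType) (V : lmodType R) (A : set V) : Prop :=
  [/\ A 0, forall x y, A x -> A y -> A (x + y) & forall a x, A x -> A (a *: x)].

Section QuotientModule.
Import Quotient.
Local Open Scope quotient_scope.
Variables (R : pzRingType) (V : lmodType R) (A : set V).
Hypothesis A_submod : submodule A.

Definition submodule_pred : {pred V} := fun x => `[< A x >].

Lemma submodule_pred_closed : subsemimod_closed submodule_pred.
Proof.
case: A_submod => A0 AD AZ; split; [split|] => [|x y|a x]; rewrite !unfold_in.
- exact/asboolP.
- by move=> /asboolP Ax /asboolP Ay; apply/asboolP; apply: AD.
- by move=> /asboolP Ax; apply/asboolP; apply: AZ.
Qed.
HB.instance Definition _ :=
  GRing.isSubmodClosed.Build R V submodule_pred submodule_pred_closed.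

Notation Q := {quot submodule_pred}.

Definition quot_scale (a : R) (q : Q) : Q := \pi_Q (a *: repr q).

Lemma pi_quot_scale a x : \pi_Q (a *: x) = quot_scale a (\pi_Q x).
Proof.
apply/eqP; rewrite -idealrBE -scalerBr rpredZ //.
by rewrite idealrBE reprK.
Qed.

Lemma quot_scaleA a b q : quot_scale a (quot_scale b q) = quot_scale (a * b) q.
Proof.
by elim/quotW: q => x; rewrite -(pi_quot_scale b) -(pi_quot_scale a) -pi_quot_scale scalerA.
Qed.

Lemma quot_scale1 : left_id 1 quot_scale.
Proof. by elim/quotW => x; rewrite -pi_quot_scale scale1r. Qed.

Lemma quot_scaleDr : right_distributive quot_scale +%R.
Proof.
move=> a; elim/quotW => x; elim/quotW => y.
by rewrite -!pi_quot_scale -!raddfD /= -pi_quot_scale scalerDr.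
Qed.

Lemma quot_scaleDl q : {morph quot_scale^~ q : a b / a + b}.
Proof. by elim/quotW: q => x a b; rewrite -!pi_quot_scale -raddfD /= scalerDl. Qed.

HB.instance Definition _ :=
  GRing.Zmodule_isLmodule.Build R Q quot_scaleA quot_scale1 quot_scaleDr quot_scaleDl.

Lemma pi_submodule_linear : linear (\pi_Q : V -> Q).
Proof. by move=> a x y; rewrite raddfD /= pi_quot_scale. Qed.

Lemma pi_submodule_eq0 x : \pi_Q x = 0 <-> A x.
Proof.
rewrite -(raddf0 \pi_Q); split.
  by move/eqP; rewrite -idealrBE subr0 => /asboolP.
by move=> Ax; apply/eqP; rewrite -idealrBE subr0; apply/asboolP.
Qed.

Lemma submodule_is_kernel :
  exists (W : lmodType R) (f : {linear V -> W}), forall x, f x = 0 <-> A x.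
Proof.
exists Q, (mk_linear pi_submodule_linear); exact: pi_submodule_eq0.
Qed.

End QuotientModule.

Definition ideal (R : comPzRingType) (I : set R) : Prop := submodule (I : set R^o).

Definition idempotent_generated_ideals (R : comPzRingType) : Prop :=
  forall I : set R, ideal I -> exists2 e, I e & forall r, I r -> r * e = r.

Lemma idempotent_generated_of_split (R : comPzRingType) :
  split_torsion_pair (@isPerpRel R) (@isRel R) -> idempotent_generated_ideals R.
Proof.
move=> [[_ tors_seq] splits] I I_ideal.
have [W [pi ker_pi]] := submodule_is_kernel I_ideal.
have [T [F [f [g [Tperp Frel fg_exact]]]]] := tors_seq (KRep pi \0).
have [s [gsK _]] := splits _ _ _ f g Tperp Frel fg_exact.
have ker_g x : ft g x = 0 <-> I x.
  by rewrite (ses_tail_ker Tperp Frel fg_exact) /=; split=> [[/ker_pi] | /ker_pi].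
pose u : R := ft s (ft g 1).
exists (1 - u) => [|r Ir]; first by apply/ker_g; rewrite linearB gsK subrr.
have gr0 : ft g (r *: (1 : R^o)) = 0 by apply/ker_g; rewrite /GRing.scale /= mulr1.
have ru0 : r * u = 0 by move: (congr1 (ft s) gr0); rewrite !linearZ linear0.
by rewrite mulrBr mulr1 ru0 subr0.
Qed.

Section Complement.
Local Open Scope classical_set_scope.
Variables (R : comPzRingType) (U : lmodType R) (K : set U).
Hypothesis K_submod : submodule K.

Lemma maximal_disjoint_submodule : exists A : set U,
  [/\ submodule A, A `&` K `<=` [set 0] &
      forall B, submodule B -> B `&` K `<=` [set 0] -> A `<=` B -> B `<=` A].
Proof.
pose P (A : set U) := [/\ forall x y, A x -> A y -> A (x + y),
  forall a x, A x -> A (a *: x) & A `&` K `<=` [set 0]].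
have chain_closed F : F `<=` P -> total_on F subset -> P (\bigcup_(X in F) X).
  move=> FP F_total; split.
  - move=> x y [X FX Xx] [Y FY Yy].
    have [XY|YX] := F_total _ _ FX FY.
      by case: (FP _ FY) => YD _ _; exists Y => //; apply: YD => //; exact: XY.
    by case: (FP _ FX) => XD _ _; exists X => //; apply: XD => //; exact: YX.
  - by move=> a x [X FX Xx]; case: (FP _ FX) => _ XZ _; exists X => //; apply: XZ.
  - by move=> x [[X FX Xx] Kx]; case: (FP _ FX) => _ _; apply.
have [A [[AD AZ AK] A_max]] := Zorn_bigcup chain_closed.
have PB B : submodule B -> B `&` K `<=` [set 0] -> P B by case=> _ BD BZ BK; split.
have A0 : A 0.
  case: (pselect (exists x, A x)) => [[x Ax]|nA]; first by rewrite -(scale0r x); apply: AZ.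
  exfalso; apply: (A_max [set 0]).
    split=> [x Ax|]; first by exfalso; apply: nA; exists x.
    by move=> /(_ 0 erefl) A0; apply: nA; exists 0.
  by split=> [x y -> ->|a x ->|x [->]]; rewrite ?addr0 ?scaler0.
exists A; split=> // B B_submod BK AB x Bx.
apply: contrapT => nAx; apply: (A_max B (conj AB _)); last exact: PB.
by move=> /(_ x Bx).
Qed.

Lemma maximal_disjoint_submodule_complement (A : set U) :
  idempotent_generated_ideals R -> submodule A -> A `&` K `<=` [set 0] ->
  (forall B, submodule B -> B `&` K `<=` [set 0] -> A `<=` B -> B `<=` A) ->
  forall x, exists2 c, A c & K (x - c).
Proof.
(* e generates the ideal of the r with r x in A + K; maximality of A forces
   (1 - e) x into A, whence e = 1. *)
move=> idem_gen [A0 AD AZ] AK A_max x; case: K_submod => K0 KD KZ.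
pose J (r : R) := exists2 c, A c & K (r *: x - c).
have J_ideal : ideal J.
  split=> [|r s [c Ac Kc] [d Ad Kd]|a r [c Ac Kc]].
  - by exists 0; rewrite // scale0r subr0.
  - by exists (c + d); [apply: AD | rewrite scalerDl opprD addrACA; apply: KD].
  - by exists (a *: c); [apply: AZ | rewrite -scalerA -scalerBr; apply: KZ].
have [e Je eJ] := idem_gen J J_ideal.
have ee : e * e = e := eJ e Je.
have J_compl r : J (r * (1 - e)) -> r * (1 - e) = 0.
  by move=> /eJ <-; rewrite -mulrA mulrBl mul1r ee subrr mulr0.
pose y := (1 - e) *: x.
pose B z := exists2 c, A c & exists r, z = c + r *: y.
have B_submod : submodule B.
  split=> [|z z' [c Ac [r ->]] [c' Ac' [r' ->]]|a z [c Ac [r ->]]].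
  - by exists 0 => //; exists 0; rewrite scale0r addr0.
  - by exists (c + c'); [apply: AD | exists (r + r'); rewrite scalerDl addrACA].
  - by exists (a *: c); [apply: AZ | exists (a * r); rewrite scalerDr scalerA].
have BK : B `&` K `<=` [set 0].
  move=> _ [[c Ac [r ->]] Kz].
  have /J_compl r_perp : J (r * (1 - e)).
    by exists (- c); [rewrite -scaleN1r; apply: AZ | rewrite opprK -scalerA addrC].
  rewrite /y scalerA r_perp scale0r addr0 in Kz *.
  exact: AK.
have Ay : A y.
  by apply: (A_max B) => // [c Ac|]; [exists c => //; exists 0; rewrite scale0r addr0
                                    | exists 0 => //; exists 1; rewrite add0r scale1r].
have /J_compl : J (1 * (1 - e)) by exists y; rewrite // mul1r subrr.
rewrite mul1r => /eqP; rewrite subr_eq0 => /eqP e1.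
by case: Je => c Ac; rewrite -e1 scale1r; exists c.
Qed.

End Complement.

Lemma surjections_split_of_idempotent_generated (R : comPzRingType) :
  idempotent_generated_ideals R -> surjections_split R.
Proof.
move=> idem_gen U V g g_surj.
pose K x := g x = 0.
have K_submod : submodule K.
  split=> [|x y|a x]; rewrite /K ?linear0 // ?linearD ?linearZZ.
    by move=> -> ->; rewrite addr0.
  by move=> ->; rewrite scaler0.
have [A [A_submod AK A_max]] := maximal_disjoint_submodule K.
have A_compl := maximal_disjoint_submodule_complement K_submod idem_gen A_submod AK A_max.
case: A_submod => _ AD AZ.
have g_A_onto v : exists c, A c /\ g c = v.
  have [x <-] := g_surj v; have [c Ac Kxc] := A_compl x.
  by exists c; split=> //; apply/eqP; rewrite eq_sym -subr_eq0 -linearB; apply/eqP.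
have g_A_inj c c' : A c -> A c' -> g c = g c' -> c = c'.
  move=> Ac Ac' gcc'; apply/eqP; rewrite -subr_eq0; apply/eqP/AK; split.
    by apply: AD => //; rewrite -scaleN1r; apply: AZ.
  by rewrite /K linearB gcc' subrr.
have [s sP] := choice g_A_onto.
have s_linear : linear s.
  move=> a v w; apply: g_A_inj; first exact: (sP _).1.
    by apply: AD; [apply: AZ|]; exact: (sP _).1.
  by rewrite linearP !(sP _).2.
by exists (mk_linear s_linear) => v; exact: (sP v).2.
Qed.

Section ProductOfFields.
Variables (R : comPzRingType) (n : nat) (K : 'I_n -> fieldType).
Variables (phi : R -> forall i, K i) (phi_bij : bijective phi).
Hypotheses (phiD : forall x y i, phi (x + y) i = phi x i + phi y i)
  (phiM : forall x y i, phi (x * y) i = phi x i * phi y i).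

Let phi_inj x y : (forall i, phi x i = phi y i) -> x = y.
Proof. by move=> eq_xy; apply: (bij_inj phi_bij); apply: functional_extensionality_dep. Qed.

Let phi0 i : phi 0 i = 0.
Proof. by apply: (addrI (phi 0 i)); rewrite -phiD !addr0. Qed.

Let phi_sum (F : 'I_n -> R) i : phi (\sum_(j < n) F j) i = \sum_(j < n) phi (F j) i.
Proof. by elim/big_rec2: _ => [|j x y _ <-]; rewrite ?phi0 ?phiD. Qed.

Lemma idempotent_generated_of_product : idempotent_generated_ideals R.
Proof.
case: phi_bij => psi phiK psiK I [I0 ID IM].
have /choice [r rP] : forall i, exists ri,
    I ri /\ ((exists2 s, I s & phi s i != 0) -> phi ri i != 0).
  move=> i; case: (pselect (exists2 s, I s & phi s i != 0)).
    by case=> s Is s_nz; exists s.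
  by move=> no_s; exists 0; split=> // /no_s.
pose w := psi (fun j => (phi (r j) j)^-1).
pose E i := psi (fun j => (j == i)%:R).
pose e := w * \sum_(i < n) E i * r i.
have phi_e j : phi e j = (phi (r j) j)^-1 * phi (r j) j.
  rewrite phiM psiK phi_sum (bigD1 j) //= big1 => [|i /negbTE ij]; rewrite phiM psiK.
    by rewrite eqxx mul1r addr0.
  by rewrite eq_sym ij mul0r.
exists e => [|s Is].
  apply: (IM w); elim/big_ind: _ => // i _; exact: (IM (E i) (r i) (rP i).1).
apply: phi_inj => j; rewrite phiM phi_e.
have [rj0|rj_nz] := eqVneq (phi (r j) j) 0; last by rewrite mulVf ?mulr1.
suff -> : phi s j = 0 by rewrite mul0r.
by apply: contra_eq rj0 => sj_nz; apply: (rP j).2; exists s.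
Qed.

End ProductOfFields.

Record field_idempotent (R : comPzRingType) := FieldIdempotent {
  fidem : R;
  fidemK : fidem * fidem = fidem;
  fidem_neq0 : fidem != 0;
  fidem_invertible : forall x, x * fidem = x -> x != 0 -> exists y, x * y = fidem }.

Section CornerField.
Variables (R : comPzRingType) (E : field_idempotent R).
Local Notation e := (fidem E).

Definition corner_pred : {pred R} := fun x => x * e == x.

Lemma corner_pred_closed : zmod_closed corner_pred.
Proof.
split=> [|x y]; rewrite !unfold_in /= ?mul0r //.
by move=> /eqP xe /eqP ye; rewrite mulrBl xe ye.
Qed.
HB.instance Definition _ := GRing.isZmodClosed.Build R corner_pred corner_pred_closed.

Record corner := Corner { corner_val : R; corner_valP : corner_val \in corner_pred }.
HB.instance Definition _ := [isSub for corner_val].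
HB.instance Definition _ := [Choice of corner by <:].
HB.instance Definition _ := [SubChoice_isSubZmodule of corner by <:].

Lemma corner_valK (a : corner) : val a * e = val a.
Proof. exact/eqP/corner_valP. Qed.

Lemma corner_proj_mem x : x * e \in corner_pred.
Proof. by rewrite unfold_in /= -mulrA fidemK. Qed.
Definition corner_proj x := Corner (corner_proj_mem x).

Definition corner_one := corner_proj 1.

Lemma corner_mul_mem (a b : corner) : val a * val b \in corner_pred.
Proof. by rewrite unfold_in /= -mulrA corner_valK. Qed.
Definition corner_mul (a b : corner) := Corner (corner_mul_mem a b).

Lemma corner_mulA : associative corner_mul.
Proof. by move=> a b c; apply: val_inj; rewrite /= mulrA. Qed.

Lemma corner_mulC : commutative corner_mul.
Proof. by move=> a b; apply: val_inj; rewrite /= mulrC. Qed.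

Lemma corner_mul1 : left_id corner_one corner_mul.
Proof. by move=> a; apply: val_inj; rewrite /= mul1r mulrC corner_valK. Qed.

Lemma corner_mulDl : left_distributive corner_mul +%R.
Proof. by move=> a b c; apply: val_inj; rewrite /= mulrDl. Qed.

Lemma corner_one_neq0 : corner_one != 0.
Proof. by apply: contra_neq (fidem_neq0 E) => /(congr1 val) /=; rewrite mul1r. Qed.

HB.instance Definition _ := GRing.Zmodule_isComNzRing.Build corner
  corner_mulA corner_mulC corner_mul1 corner_mulDl corner_one_neq0.

Definition corner_inv (a : corner) : corner :=
  if pselect (exists y, val a * y = e) is left ex_y then corner_proj (sval (cid ex_y))
  else 0.

Lemma corner_mulVf (a : corner) : a != 0 -> corner_inv a * a = 1.
Proof.
move=> a_neq0; rewrite /corner_inv; case: pselect => [ex_y|no_y]; last first.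
  exfalso; apply: no_y; apply: (fidem_invertible (corner_valK a)).
  by apply: contra_neq a_neq0 => a0; apply: val_inj.
apply: val_inj; case: cid => y /= ay.
by rewrite mul1r -mulrA [e * _]mulrC (corner_valK a) mulrC.
Qed.

Lemma corner_inv0 : corner_inv 0 = 0.
Proof.
rewrite /corner_inv; case: pselect => // ex_y; exfalso; case: ex_y => y.
by rewrite /= mul0r => /esym/eqP; rewrite (negbTE (fidem_neq0 E)).
Qed.

HB.instance Definition _ := GRing.ComNzRing_isField.Build corner corner_mulVf corner_inv0.


End CornerField.

HB.instance Definition _ (R : comPzRingType) := gen_eqMixin (field_idempotent R).

Section FieldDecomposition.
Variable R : comPzRingType.

Definition orthogonal_fidem (E E' : field_idempotent R) := fidem E * fidem E' == 0.

Definition field_decomposition (e : R) := exists2 s : seq (field_idempotent R),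
  pairwise orthogonal_fidem s & \sum_(E <- s) fidem E = e.

Lemma fidem_mul_sum s E : pairwise orthogonal_fidem s -> E \in s ->
  fidem E * \sum_(E' <- s) fidem E' = fidem E.
Proof.
elim: s => [|E' s IHs] //= /andP[E'_orth s_orth].
rewrite inE big_cons mulrDr => /predU1P[->|Es].
  rewrite fidemK mulr_sumr big1_seq ?addr0 // => E'' /andP[_ E''s].
  exact/eqP/(allP E'_orth).
by rewrite IHs // mulrC (eqP (allP E'_orth E Es)) add0r.
Qed.

Lemma field_decomposition0 : field_decomposition 0.
Proof. by exists [::]; rewrite ?big_nil. Qed.

Lemma field_decomposition_fidem E : field_decomposition (fidem E).
Proof. by exists [:: E]; rewrite ?big_seq1. Qed.

Lemma field_decompositionD f g : field_decomposition f -> field_decomposition g ->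
  f * g = 0 -> field_decomposition (f + g).
Proof.
move=> [s s_orth <-] [t t_orth <-] st0; exists (s ++ t); last by rewrite big_cat.
rewrite pairwise_cat s_orth t_orth !andbT; apply/allrelP => E E' Es E't.
by rewrite /orthogonal_fidem -(fidem_mul_sum s_orth Es) -(fidem_mul_sum t_orth E't)
  mulrACA st0 mulr0.
Qed.

End FieldDecomposition.

Section IdempotentGeneratedIdeals.
Variable R : comPzRingType.
Hypothesis idem_gen : idempotent_generated_ideals R.

Lemma idempotent_split_of_nonunit (e x : R) : x * e = x -> x != 0 ->
  ~ (exists y, x * y = e) -> exists f, [/\ f * f = f, f * e = f, f != 0 & f != e].
Proof.
move=> xe x_neq0 x_nonunit.
have xR_ideal : ideal (fun r => exists t, r = x * t).
  split=> [|r r' [t ->] [t' ->]|a r [t ->]]; first by exists 0; rewrite mulr0.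
    by exists (t + t'); rewrite mulrDr.
  by exists (a * t); rewrite /GRing.scale /= mulrCA.
have [f [t ->] f_unit] := idem_gen xR_ideal.
have xf : x * (x * t) = x by apply: f_unit; exists 1; rewrite mulr1.
exists (x * t); split.
- by apply: f_unit; exists t.
- by rewrite mulrAC xe.
- by apply: contra_neq x_neq0 => xt0; rewrite -xf xt0 mulr0.
- by apply/eqP => xte; apply: x_nonunit; exists t.
Qed.

Lemma idempotent_chain_stationary (F : nat -> R) :
  (forall k, F k * F k = F k) -> (forall k, F k.+1 * F k = F k.+1) ->
  exists k, F k.+1 = F k.
Proof.
move=> FK F_decr.
have F_le k m : (k <= m)%N -> F m * F k = F m.
  elim: m => [|m IHm]; first by rewrite leqn0 => /eqP ->.
  rewrite leq_eqVlt => /predU1P[-> //|]; rewrite ltnS => /IHm km.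
  by rewrite -[in LHS]F_decr -mulrA km F_decr.
(* J, the increasing union of the annihilators of the F k, is generated by an e
   with e * F k = 0 for some k; then F k - F k.+1 lies in J and is fixed by
   multiplication with F k, so it vanishes. *)
pose J r := exists k, r * F k = 0.
have J_up r k m : (k <= m)%N -> r * F k = 0 -> r * F m = 0.
  by move=> /F_le <- rk0; rewrite mulrCA rk0 mulr0.
have J_ideal : ideal J.
  split=> [|r s [k rk0] [m sm0]|a r [k rk0]]; first by exists 0%N; rewrite mul0r.
    exists (maxn k m); rewrite mulrDl.
    by rewrite (J_up r k) ?leq_maxl // (J_up s m) ?leq_maxr // addr0.
  by exists k; rewrite /GRing.scale /= -mulrA rk0 mulr0.
have [e [k ek0] eJ] := idem_gen J_ideal.
exists k; apply/eqP; rewrite eq_sym -subr_eq0; apply/eqP.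
have gJ : J (F k - F k.+1) by exists k.+1; rewrite mulrBl FK mulrC F_decr subrr.
have gFk : (F k - F k.+1) * F k = F k - F k.+1 by rewrite mulrBl FK F_decr.
by rewrite -(eJ _ gJ) -gFk -mulrA [F k * e]mulrC ek0 mulr0.
Qed.

Lemma field_decomposition_descent (e : R) : e * e = e -> ~ field_decomposition e ->
  exists f, [/\ f * f = f, ~ field_decomposition f, f * e = f & f != e].
Proof.
move=> ee e_nfd.
have e_neq0 : e != 0 by apply/eqP => e0; apply: e_nfd; rewrite e0; exact: field_decomposition0.
have [x [xe x_neq0 x_nonunit]] : exists x, [/\ x * e = x, x != 0 & ~ exists y, x * y = e].
  apply: contrapT => e_field; apply: e_nfd.
  suff e_inv x : x * e = x -> x != 0 -> exists y, x * y = e.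
    exact: (field_decomposition_fidem (FieldIdempotent ee e_neq0 e_inv)).
  by move=> xe x_neq0; apply: contrapT => x_nonunit; apply: e_field; exists x.
have [f [ff fe f_neq0 f_neq_e]] := idempotent_split_of_nonunit xe x_neq0 x_nonunit.
have gg : (e - f) * (e - f) = e - f.
  by rewrite mulrBl !mulrBr ee ff [e * f]mulrC fe subrr subr0.
have fg0 : f * (e - f) = 0 by rewrite mulrBr [f * e]fe ff subrr.
have [f_fd|f_nfd] := pselect (field_decomposition f); last by exists f.
exists (e - f); split=> //.
- move=> g_fd; apply: e_nfd; rewrite -(subrK f e).
  by apply: field_decompositionD => //; rewrite mulrC.
- by rewrite mulrBl ee fe.
- by rewrite -subr_eq0 addrAC subrr add0r oppr_eq0.
Qed.

Lemma field_decomposition1 : field_decomposition (1 : R).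
Proof.
apply: contrapT => one_nfd.
pose X := {e : R | e * e = e /\ ~ field_decomposition e}.
have /choice [next nextP] : forall a : X,
    exists b : X, sval b * sval a = sval b /\ sval b != sval a.
  move=> [e [ee e_nfd]].
  have [f [ff f_nfd fe f_neq_e]] := field_decomposition_descent ee e_nfd.
  by exists (exist _ f (conj ff f_nfd)).
pose a0 : X := exist _ 1 (conj (mulr1 1) one_nfd).
pose F k := sval (iter k next a0).
have FK k : F k * F k = F k by case: (svalP (iter k next a0)).
have F_decr k : F k.+1 * F k = F k.+1 by case: (nextP (iter k next a0)).
have [k] := idempotent_chain_stationary FK F_decr.
by apply/eqP; case: (nextP (iter k next a0)).
Qed.

End IdempotentGeneratedIdeals.

Lemma product_of_field_decomposition1 (R : comPzRingType) :
  field_decomposition (1 : R) -> finite_product_of_fields R.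
Proof.
case=> s s_orth s_sum; pose E i := tnth (in_tuple s) i.
have E_orth i j : i != j -> fidem (E i) * fidem (E j) = 0.
  move=> ij; pose x0 := E i.
  have E_nth k : E k = nth x0 s k by rewrite /E (tnth_nth x0).
  rewrite !E_nth; have /(pairwiseP x0) s_lt := s_orth.
  have [lt_ij|lt_ji|/val_inj eq_ij] := ltngtP i j; last by rewrite eq_ij eqxx in ij.
    by apply/eqP/s_lt; rewrite ?inE.
  by rewrite mulrC; apply/eqP/s_lt; rewrite ?inE.
have E_sum : \sum_i fidem (E i) = 1 by rewrite -s_sum (big_tnth _ _ s).
pose phi (r : R) i : corner (E i) := corner_proj (E i) r.
pose psi (v : forall i, corner (E i)) := \sum_i val (v i).
exists (size s), (fun i => corner (E i) : fieldType), phi; split.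
- exists psi => [r | v].
    by rewrite /psi /= -mulr_sumr E_sum mulr1.
  apply: functional_extensionality_dep => j; apply: val_inj => /=.
  rewrite mulr_suml (bigD1 j) //= corner_valK big1 ?addr0 // => i ij.
  by rewrite -(corner_valK (v i)) -mulrA E_orth ?mulr0.
- by move=> i; apply: val_inj.
- by move=> x y i; apply: val_inj; rewrite /= mulrDl.
- by move=> x y i; apply: val_inj; rewrite /= mulrACA fidemK.
Qed.

Theorem proposition3p9 (R : comPzRingType) :
  torsion_pair (@isPerpRel R) (@isRel R) /\
  (split_torsion_pair (@isPerpRel R) (@isRel R) <-> finite_product_of_fields R).
Proof.
have tors := torsion_pair_perpRel_Rel R.
split=> //; split.
  move=> /idempotent_generated_of_split/field_decomposition1.
  exact: product_of_field_decomposition1.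
case=> n [K [phi [phi_bij _ phiD phiM]]].
have /surjections_split_of_idempotent_generated surj_split :=
  idempotent_generated_of_product phi_bij phiD phiM.
split=> // T M F f g Tperp _ fg_exact.
exact: ses_splits_of_surjections_split Tperp fg_exact surj_split.
Qed.
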